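(* The BSDE is stabilizable if and only if $S_0\subset\mathcal C$, where $S_0:=\{y\in\mathbb R^d: Ay=0\}$. Consequently: (i) if $\mathbb S$ consists of a single ergodic class ($m=1$), then the BSDE is stabilizable; (ii) if $\mathbb S=\bigcup_{k=1}^m\mathbb S_k$ is the partition into ergodic classes, then the BSDE is stabilizable if and only if $\mathsf 1_{\mathbb S_k}\in\mathcal C$ for all $k=1,\dots,m$.
   Context: Let $\mathbb S=\{1,\dots,d\}$. Functions on $\mathbb S$ are identified with vectors in $\mathbb R^d$; $\mathsf 1$ is the all-ones vector, $\mathsf 1_D$ the indicator of $D\subset\mathbb S$, and $gh$ the entrywise product. $A$ is the rate matrix of a continuous-time Markov chain on $\mathbb S$ (off-diagonal entries nonnegative, rows summing to zero). $\mathbb S=\bigcup_{k=1}^m\mathbb S_k$ is its partition into ergodic classes, each a closed irreducible class. $h\in\mathbb R^d$ is the observation function of the model $Z_t=\int_0^th(X_s)\,\mathrm ds+W_t$. The BSDE is $$-\mathrm dY_t=(AY_t+hU_t+hV_t)\,\mathrm dt-V_t\,\mathrm dZ_t$$ with admissible (observation-adapted, square-integrable) controls $U$. Its controllable subspace $\mathcal C$ is the set of $Y_0$ reachable from some deterministic terminal condition $Y_T=c\mathsf 1$ using some admissible control. Equivalently (by a known result), $\mathcal C$ is the smallest subspace of $\mathbb R^d$ containing $\mathsf 1$ and closed under $g\mapsto Ag$ and $g\mapsto gh$. Since $\mathcal C$ is $A$-invariant, $A$ induces a map $\bar A_{uc}$ on $\mathbb R^d/\mathcal C$; in an orthonormal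 basis adapted to $\mathcal C\oplus\mathcal C^\perp$, $A$ is block upper triangular and $\bar A_{uc}$ is its lower-right block. The BSDE is stabilizable if either $\mathcal C=\mathbb R^d$, or $\mathcal C\ne\mathbb R^d$ and $\bar A_{uc}$ is Hurwitz. *)

(* Functions on S = {1..d} are column vectors 'cV[R]_d,
   the scalar field is an arbitrary real closed field R (e.g. the reals). *)
From HB Require Import structures.
From mathcomp Require Import all_boot all_order all_algebra.
From mathcomp Require Import complex.
Set Implicit Arguments. Unset Strict Implicit. Unset Printing Implicit Defensive.
Import Order.TTheory GRing.Theory Num.Theory.
Local Open Scope ring_scope.

Section Defs.
Variable R : rcfType.

Definition ones (d : nat) : 'cV[R]_d := const_mx 1.

Definition indic (d : nat) (D : {set 'I_d}) : 'cV[R]_d :=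
  \col_i (if i \in D then 1 else 0).

Definition hprod (d : nat) (g h : 'cV[R]_d) : 'cV[R]_d :=
  \col_i (g i 0 * h i 0).

(* membership of a vector in the subspace given by the row space of V *)
Definition inV (d : nat) (V : 'M[R]_d) (g : 'cV[R]_d) : bool := (g^T <= V)%MS.

Definition rate_matrix (d : nat) (A : 'M[R]_d) : Prop :=
  (forall i j : 'I_d, i != j -> 0 <= A i j) /\
  (forall i : 'I_d, \sum_(j < d) A i j = 0).

Definition trans (d : nat) (A : 'M[R]_d) : rel 'I_d :=
  fun i j => (i != j) && (0 < A i j).

Definition ergodic_partition (d : nat) (A : 'M[R]_d) (m : nat)
    (S : 'I_m -> {set 'I_d}) : Prop :=
  (forall k, S k != set0) /\
  (forall i : 'I_d, exists k, i \in S k) /\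
  (forall k l (i : 'I_d), i \in S k -> i \in S l -> k = l) /\
  (forall k (i j : 'I_d), i \in S k -> trans A i j -> j \in S k) /\
  (forall k (i j : 'I_d), i \in S k -> j \in S k -> connect (trans A) i j).

Definition inC (d : nat) (A : 'M[R]_d) (h g : 'cV[R]_d) : Prop :=
  forall V : 'M[R]_d,
    inV V (ones d) ->
    (forall f, inV V f -> inV V (A *m f)) ->
    (forall f, inV V f -> inV V (hprod f h)) ->
    inV V g.

Definition hurwitz (s : nat) (B : 'M[R]_s) : Prop :=
  forall z : R[i],
    root (map_poly (fun x : R => (x%:C)%C) (char_poly B)) z -> Re z < 0.

(* the BSDE is stabilizable: either C = R^d, or C <> R^d and the map
   induced by A on R^d / C is Hurwitz; the latter is the lower-right block
   of A written in an orthonormal basis P = [P1 P2] with P1 a basis of C *)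
Definition stabilizable (d : nat) (A : 'M[R]_d) (h : 'cV[R]_d) : Prop :=
  (forall g : 'cV[R]_d, inC A h g) \/
  (~ (forall g : 'cV[R]_d, inC A h g) /\
   exists (r s : nat) (P : 'M[R]_(d, r + s)),
     (r + s)%N = d /\
     P^T *m P = 1%:M /\
     (forall g : 'cV[R]_d, inC A h g <-> exists x : 'cV[R]_r, g = lsubmx P *m x) /\
     hurwitz (drsubmx (P^T *m A *m P))).

End Defs.

(* Since
      C is A-invariant, P^T A P is block upper triangular and its lower-right
      block D = P2^T A P2 represents the map induced by A on R^d / C.
   2. Markov chain facts, from a maximum principle on each closed irreducible
      class: ker A is spanned by the indicators 1_{S_k}, and ker A^2 = ker A.
      A Gershgorin estimate shows that 0 is the only (complex) eigenvalue of A
      with nonnegative real part.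
   3. Index argument: if ker A^2 = ker A, then c y = q(A) y + r(A) A y for
      some c != 0 and polynomials q, r with q(A) y in ker A.  Hence, if
      ker A is contained in C, then A y in C implies y in C.
   4. Every eigenvalue of D is one of A, so by 2. D can only fail to be
      Hurwitz through a null vector b; then y = P2 b has A y in C, so y in C
      by 3., forcing b = 0.  Conversely, if D is Hurwitz and A y = 0, the
      component b = P2^T y of y orthogonal to C satisfies D b = 0, so b = 0. *)
From HB Require Import structures.
From mathcomp Require Import all_boot all_order all_algebra.
From mathcomp Require Import complex.
From mathcomp Require Import zify lra.
Import Order.TTheory GRing.Theory Num.Theory.
Local Open Scope ring_scope.
Set Implicit Arguments. Unset Strict Implicit. Unset Printing Implicit Defensive.

Section Controllable.
Variables (R : rcfType) (d : nat) (A : 'M[R]_d) (h : 'cV[R]_d).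

Lemma inC_ones : inC A h (ones R d).
Proof. by move=> V. Qed.

Lemma inC_A g : inC A h g -> inC A h (A *m g).
Proof. by move=> Cg V V1 VA Vh; apply: (VA); exact: Cg. Qed.

Lemma inC_0 : inC A h 0.
Proof. by move=> V _ _ _; rewrite /inV trmx0 sub0mx. Qed.

Lemma inC_add f g : inC A h f -> inC A h g -> inC A h (f + g).
Proof.
move=> Cf Cg V V1 VA Vh; rewrite /inV linearD /=.
by apply: addmx_sub; [apply: Cf | apply: Cg].
Qed.

Lemma inC_scale (a : R) g : inC A h g -> inC A h (a *: g).
Proof.
move=> Cg V V1 VA Vh; rewrite /inV linearZ /=.
by apply: scalemx_sub; apply: Cg.
Qed.

Lemma inC_sum (I : finType) (F : I -> 'cV[R]_d) (P : pred I) :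
  (forall i, P i -> inC A h (F i)) -> inC A h (\sum_(i | P i) F i).
Proof. by move=> CF; apply: big_ind => //; [exact: inC_0 | exact: inC_add]. Qed.

(* One closure step for the row space of a matrix V whose rows are the
   transposes of vectors: add the images of the rows under A and under h. *)
Definition Cstep (V : 'M[R]_d) : 'M[R]_d :=
  (V + V *m A^T + V *m diag_mx h^T)%MS.

Definition C0 : 'M[R]_d := <<(ones R d)^T>>%MS.
Definition Cmx : 'M[R]_d := iter d.+1 Cstep C0.

Lemma Cstep_ge V : (V <= Cstep V)%MS.
Proof. by rewrite /Cstep -addsmxA addsmxSl. Qed.

Lemma Cstep_mono V W : (V <= W)%MS -> (Cstep V <= Cstep W)%MS.
Proof. by move=> VW; rewrite /Cstep !addsmxS ?submxMr. Qed.

Lemma hprod_tr g : (hprod g h)^T = g^T *m diag_mx h^T.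
Proof.
apply/matrixP => i j; rewrite (ord1 i) !mxE (bigD1 j) //= big1 ?addr0.
  by rewrite !mxE eqxx mulr1n.
by move=> k /negbTE nkj; rewrite !mxE nkj mulr0n mulr0.
Qed.

(* The iteration increases strictly until it stabilizes, and the rank is at
   most d, so after d + 1 steps it has reached a fixed point. *)
Lemma Cstep_iter_fix k :
  (Cstep (iter k Cstep C0) <= iter k Cstep C0)%MS \/
  (k <= \rank (iter k Cstep C0))%N.
Proof.
elim: k => [|k [fixk|rk]]; [by right | by left; exact: Cstep_mono |].
set V := iter k _ _ in rk *.
have [fixV|nfixV] := boolP (Cstep V <= V)%MS; first by left; exact: Cstep_mono.
right; apply: leq_trans (rank_ltmx _); first exact: rk.
by rewrite ltmxE Cstep_ge nfixV.
Qed.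

Lemma Cmx_stable : (Cstep Cmx <= Cmx)%MS.
Proof. by have [//|] := Cstep_iter_fix d.+1; rewrite ltnNge rank_leq_col. Qed.

Lemma C0_Cmx : (C0 <= Cmx)%MS.
Proof. by rewrite /Cmx; elim: d.+1 => //= k IH; exact: submx_trans IH (Cstep_ge _). Qed.

Lemma Cmx_minimal V : inV V (ones R d) ->
  (forall f, inV V f -> inV V (A *m f)) ->
  (forall f, inV V f -> inV V (hprod f h)) -> (Cmx <= V)%MS.
Proof.
move=> V1 VA Vh; rewrite /Cmx; elim: d.+1 => /= [|k IH]; first by rewrite genmxE.
rewrite /Cstep !addsmx_sub IH /=; apply/andP; split;
  apply: submx_trans (submxMr _ IH) _; apply/row_subP => i; rewrite row_mul.
  by have := VA (row i V)^T; rewrite /inV trmx_mul !trmxK; apply; exact: row_sub.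
by have := Vh (row i V)^T; rewrite /inV hprod_tr !trmxK; apply; exact: row_sub.
Qed.

Lemma inCP g : inC A h g <-> inV Cmx g.
Proof.
have /andP[CA Ch] : (Cmx *m A^T <= Cmx)%MS && (Cmx *m diag_mx h^T <= Cmx)%MS.
  by have := Cmx_stable; rewrite /Cstep !addsmx_sub => /andP[/andP[_ ->] ->].
split=> [Cg | gC V V1 VA Vh]; last exact: submx_trans gC (Cmx_minimal V1 VA Vh).
apply: Cg => [|f|f]; rewrite /inV.
- by rewrite -(genmxE (ones R d)^T) C0_Cmx.
- by move=> fC; rewrite trmx_mul; exact: submx_trans (submxMr _ fC) CA.
- by move=> fC; rewrite hprod_tr; exact: submx_trans (submxMr _ fC) Ch.
Qed.

Lemma C_full_dec : (forall g, inC A h g) \/ ~ (forall g, inC A h g).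
Proof.
have [full|nfull] := boolP (row_full Cmx).
  by left=> g; apply/inCP; exact: submx_full.
right=> allC; move/negP: nfull; apply; rewrite -sub1mx; apply/row_subP => i.
by have /inCP := allC (row i 1%:M)^T; rewrite /inV trmxK.
Qed.

End Controllable.

Section MarkovKernel.
Variables (R : rcfType) (d : nat) (A : 'M[R]_d) (m : nat).
Variable S : 'I_m -> {set 'I_d}.
Hypothesis rateA : rate_matrix A.
Hypothesis ergS : ergodic_partition A S.

Lemma rate_offdiag i j : i != j -> 0 <= A i j.
Proof. exact: (proj1 rateA). Qed.

Lemma class_of i : exists k, i \in S k.
Proof. by case: ergS => _ [H _]; apply: H. Qed.

Lemma class_uniq k l i : i \in S k -> i \in S l -> k = l.
Proof. by case: ergS => _ [_ [H _]]; apply: H. Qed.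

Lemma class_closed k i j : i \in S k -> trans A i j -> j \in S k.
Proof. by case: ergS => _ [_ [_ [H _]]]; apply: H. Qed.

Lemma class_connect k i j : i \in S k -> j \in S k -> connect (trans A) i j.
Proof. by case: ergS => _ [_ [_ [_ H]]]; apply: H. Qed.

(* Since rows sum to zero, A acts by (A f)_i = sum_j A_ij (f_j - f_i). *)
Lemma Af_expand (f : 'cV[R]_d) i :
  (A *m f) i 0 = \sum_j A i j * (f j 0 - f i 0).
Proof.
rewrite mxE; under [RHS]eq_bigr do rewrite mulrBr.
by rewrite sumrB -mulr_suml (proj2 rateA) mul0r subr0.
Qed.

Lemma rate_out_of_class k i j : i \in S k -> j \notin S k -> A i j = 0.
Proof.
move=> Si Sj; have nij : i != j by apply: contraNneq Sj => <-.
have := rate_offdiag nij; rewrite le_eqVlt => /orP[/eqP <- //|Aij_gt0].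
by move: Sj; rewrite (class_closed Si) //= /trans nij Aij_gt0.
Qed.

(* At a maximum x over the class with (A f)_x >= 0, every rate term
   A_xj (f_j - f_x) is <= 0 and they sum to >= 0, so all vanish: the
   maximum propagates along transitions. *)
Lemma max_step k (f : 'cV[R]_d) x y :
  x \in S k -> (forall j, j \in S k -> f j 0 <= f x 0) ->
  0 <= (A *m f) x 0 -> trans A x y -> f y 0 = f x 0.
Proof.
move=> Sx fmax Af_ge0 xy.
have term_le0 j : A x j * (f j 0 - f x 0) <= 0.
  have [<-|nxj] := eqVneq x j; first by rewrite subrr mulr0.
  have [Sj|Sj] := boolP (j \in S k); last by rewrite (rate_out_of_class Sx Sj) mul0r.
  by rewrite mulr_ge0_le0 ?rate_offdiag // subr_le0 fmax.
have opp_ge0 j : true -> 0 <= - (A x j * (f j 0 - f x 0)).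
  by move=> _; rewrite oppr_ge0.
have sum0 : \sum_j - (A x j * (f j 0 - f x 0)) = 0.
  apply/eqP; rewrite eq_le sumr_ge0 ?andbT //.
  by rewrite sumrN oppr_le0 -Af_expand.
move/eqP: (psumr_eq0P opp_ge0 sum0 (i:=y) isT).
rewrite oppr_eq0 mulf_eq0 subr_eq0 => /orP[|/eqP //].
by move: xy => /andP[_ /lt0r_neq0 /negbTE ->].
Qed.

Lemma max_principle k (f : 'cV[R]_d) :
  (forall i, i \in S k -> 0 <= (A *m f) i 0) ->
  forall i j, i \in S k -> j \in S k -> f i 0 = f j 0.
Proof.
move=> subharm.
have /set0Pn [i0 Si0] : S k != set0 by case: ergS.
pose x := [arg max_(x > i0 in S k) f x 0]%O.
have [Sx fmax] : x \in S k /\ forall j, j \in S k -> f j 0 <= f x 0.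
  by rewrite /x; case: arg_maxP => // x' Sx' fmax; split => // j /fmax.
have reach p z : z \in S k -> f z 0 = f x 0 -> path (trans A) z p ->
    f (last z p) 0 = f x 0.
  elim: p z => [|y p IH] z Sz fz //= /andP[zy yp].
  have zmax j : j \in S k -> f j 0 <= f z 0 by rewrite fz; exact: fmax.
  by apply: IH; rewrite ?(class_closed Sz zy) ?(max_step Sz zmax (subharm z Sz) zy).
have all_max j : j \in S k -> f j 0 = f x 0.
  by move=> Sj; have /connectP [p xp ->] := class_connect Sx Sj; exact: reach.
by move=> i j Si Sj; rewrite !all_max.
Qed.

Lemma ker_const (f : 'cV[R]_d) : A *m f = 0 ->
  forall k i j, i \in S k -> j \in S k -> f i 0 = f j 0.
Proof. by move=> Af0 k; apply: max_principle => i _; rewrite Af0 mxE. Qed.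

Lemma const_class_harmonic k (f : 'cV[R]_d) i : i \in S k ->
  (forall j, j \in S k -> f j 0 = f i 0) -> (A *m f) i 0 = 0.
Proof.
move=> Si fconst; rewrite Af_expand big1 // => j _.
have [Sj|Sj] := boolP (j \in S k); first by rewrite fconst // subrr mulr0.
by rewrite (rate_out_of_class Si Sj) mul0r.
Qed.

(* ker A^2 = ker A: A x is constant on each class, and the maximum principle
   applied to x or -x (according to the sign of that constant) makes x
   constant on the class, so (A x)_i = 0. *)
Lemma ker_sq_ker (x : 'cV[R]_d) : A *m (A *m x) = 0 -> A *m x = 0.
Proof.
move=> A2x0; apply/matrixP => i j; rewrite (ord1 j) [RHS]mxE.
have [k Si] := class_of i.
have Ax_const := ker_const A2x0 Si.
apply: (const_class_harmonic Si) => l Sl.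
have [Ax_ge0|Ax_lt0] := lerP 0 ((A *m x) i 0).
  by apply: (max_principle (k := k)) => // l' Sl'; rewrite -(Ax_const l' Sl').
have Anx_ge0 l' : l' \in S k -> 0 <= (A *m (- x)) l' 0.
  by move=> Sl'; rewrite mulmxN mxE oppr_ge0 -(Ax_const l' Sl') ltW.
by have := max_principle Anx_ge0 Sl Si; rewrite !mxE => /oppr_inj.
Qed.

Lemma indic_ker k : A *m indic R (S k) = 0.
Proof.
apply/matrixP => i j; rewrite (ord1 j) [RHS]mxE.
have [l Si] := class_of i.
apply: (const_class_harmonic Si) => i' Si'; rewrite !mxE.
suff -> : (i' \in S k) = (i \in S k) by [].
by apply/idP/idP => Sk; [rewrite (class_uniq Sk Si') | rewrite (class_uniq Sk Si)].
Qed.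

Lemma ker_span_indic (y : 'cV[R]_d) : A *m y = 0 ->
  exists c : 'I_m -> R, y = \sum_k c k *: indic R (S k).
Proof.
move=> Ay0; exists (fun k => if [pick j in S k] is Some j then y j 0 else 0).
apply/matrixP => i j; rewrite (ord1 j) summxE.
have [l Si] := class_of i.
rewrite (bigD1 l) //= big1 ?addr0 => [|k nkl]; rewrite !mxE.
  rewrite Si mulr1; case: pickP => [i' Si'|/(_ i)]; last by rewrite Si.
  exact: ker_const Ay0 _ _ _ Si Si'.
by case: ifP => [Sk|]; [rewrite (class_uniq Si Sk) eqxx in nkl | rewrite mulr0].
Qed.

Lemma ker_in_C_iff_indic (h : 'cV[R]_d) :
  (forall y, A *m y = 0 -> inC A h y) <-> (forall k, inC A h (indic R (S k))).
Proof.
split=> [kerC k | indicC y /ker_span_indic [c ->]]; first exact/kerC/indic_ker.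
by apply: inC_sum => k _; exact/inC_scale/indicC.
Qed.

Lemma indic_single_class : m = 1%N -> forall k, indic R (S k) = ones R d.
Proof.
move=> m1 k; apply/matrixP => i j; rewrite !mxE.
have [k' Sk'] := class_of i.
suff -> : k = k' by rewrite Sk'.
have k_lt1 (l : 'I_m) : (l < 1)%N by rewrite -m1.
by apply/val_inj; have := k_lt1 k; have := k_lt1 k'; rewrite /=; lia.
Qed.

End MarkovKernel.

Section Gershgorin.
Variables (R : rcfType) (d : nat) (A : 'M[R]_d).
Hypothesis rateA : rate_matrix A.

Local Notation normc := (@Normc.normc R).
Local Notation Ac := (map_mx (real_complex R) A).

Lemma normc_def (w : R[i]) :
  normc w = Num.sqrt (complex.Re w ^+ 2 + complex.Im w ^+ 2).
Proof. by case: w. Qed.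

Lemma normc_ge0 (w : R[i]) : 0 <= normc w.
Proof. by rewrite normc_def sqrtr_ge0. Qed.

Lemma normc_real (a : R) : normc (a%:C)%C = `|a|.
Proof. by rewrite normc_def /= expr0n /= addr0 sqrtr_sqr. Qed.

Lemma normc_sum (I : finType) (P : pred I) (F : I -> R[i]) :
  normc (\sum_(i | P i) F i) <= \sum_(i | P i) normc (F i).
Proof.
apply: (big_ind2 (fun x y => normc x <= y)) => //; first by rewrite Normc.normc0.
by move=> x1 x2 y1 y2 le1 le2; apply: le_trans (le_normcD _ _) (lerD le1 le2).
Qed.

Lemma max_modulus_coord (u : 'cV[R[i]]_d) : u != 0 ->
  exists i, 0 < normc (u i 0) /\ forall j, normc (u j 0) <= normc (u i 0).
Proof.
move=> un0; have [i0 ui0] : exists i0, u i0 0 != 0.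
  case: (pickP (fun i => u i 0 != 0)) => [i0 ui0|u0]; first by exists i0.
  by move/eqP: un0; case; apply/matrixP => i j; rewrite (ord1 j) mxE; apply/eqP/negbFE.
pose i := [arg max_(i > i0) normc (u i 0)]%O.
have umax j : normc (u j 0) <= normc (u i 0).
  by rewrite /i; case: arg_maxP => // i' _ max_i'; apply: max_i'.
exists i; split=> //; apply: lt_le_trans (umax i0); rewrite lt_def normc_ge0 andbT.
by apply: contra ui0 => /eqP /Normc.eq0_normc ->.
Qed.

(* Gershgorin's estimate at a coordinate of maximal modulus: since the row
   sums vanish, the eigenvalue lies in the disc of center A_ii and radius
   -A_ii. *)
Lemma gershgorin_disc z (u : 'cV[R[i]]_d) i :
  Ac *m u = z *: u -> 0 < normc (u i 0) ->
  (forall j, normc (u j 0) <= normc (u i 0)) ->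
  normc (z - (A i i)%:C%C) <= - A i i.
Proof.
move=> Au ui_gt0 umax.
have row_i : (z - (A i i)%:C%C) * u i 0 = \sum_(j | j != i) (A i j)%:C%C * u j 0.
  have := congr1 (fun N : 'cV[R[i]]_d => N i 0) Au; rewrite /= !mxE (bigD1 i) //=.
  rewrite mxE mulrBl => <-; rewrite addrAC subrr add0r.
  by apply: eq_bigr => j _; rewrite mxE.
have off_sum : \sum_(j | j != i) A i j = - A i i.
  have := (proj2 rateA) i; rewrite (bigD1 i) //= => /eqP.
  by rewrite addrC addr_eq0 => /eqP.
rewrite -(ler_pM2r ui_gt0) -Normc.normcM row_i; apply: le_trans (normc_sum _ _) _.
rewrite -off_sum mulr_suml; apply: ler_sum => j nji.
have Aij_ge0 : 0 <= A i j by apply: (proj1 rateA); rewrite eq_sym.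
by rewrite Normc.normcM normc_real ger0_norm // ler_wpM2l.
Qed.

Lemma disc_right_halfplane (a x y : R) :
  0 <= x -> Num.sqrt ((x - a) ^+ 2 + y ^+ 2) <= - a -> x = 0 /\ y = 0.
Proof.
move=> x_ge0; set r := Num.sqrt _ => r_le.
have r_ge0 : 0 <= r by rewrite sqrtr_ge0.
have r2 : r ^+ 2 = (x - a) ^+ 2 + y ^+ 2 by rewrite sqr_sqrtr // addr_ge0 ?sqr_ge0.
have x0 : x = 0 by nra.
by split=> //; rewrite x0 in r2; nra.
Qed.

Lemma rate_eigen_re_ge0 z (u : 'cV[R[i]]_d) :
  u != 0 -> Ac *m u = z *: u -> 0 <= complex.Re z -> z = 0.
Proof.
move=> un0 Au Re_ge0; have [i [ui_gt0 umax]] := max_modulus_coord un0.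
move: (gershgorin_disc Au ui_gt0 umax) Re_ge0; rewrite normc_def.
case: z {Au} => x y /=; rewrite oppr0 addr0 => disc x_ge0.
by have [-> ->] := disc_right_halfplane x_ge0 disc.
Qed.

End Gershgorin.

Section Eigenvectors.
Variable F : fieldType.

Lemma char_poly_trmx n (M : 'M[F]_n) : char_poly M^T = char_poly M.
Proof.
rewrite /char_poly -det_tr; congr (\det _); apply/matrixP => i j.
by rewrite !mxE eq_sym.
Qed.

Lemma left_eigen_root n (M : 'M[F]_n) a (v : 'rV[F]_n) :
  v != 0 -> v *m M = a *: v -> root (char_poly M) a.
Proof. by move=> vn0 Mv; rewrite -eigenvalue_root_char; apply/eigenvalueP; exists v. Qed.

Lemma root_right_eigen n (M : 'M[F]_n) a : root (char_poly M) a ->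
  exists2 u : 'cV[F]_n, u != 0 & M *m u = a *: u.
Proof.
rewrite -char_poly_trmx -eigenvalue_root_char => /eigenvalueP [v Mv vn0].
by exists v^T; rewrite ?trmx_eq0 // -[M]trmxK -trmx_mul Mv linearZ.
Qed.

Lemma right_eigen_root n (M : 'M[F]_n) a (u : 'cV[F]_n) :
  u != 0 -> M *m u = a *: u -> root (char_poly M) a.
Proof.
move=> un0 Mu; rewrite -char_poly_trmx; apply: (left_eigen_root (v := u^T)).
  by rewrite trmx_eq0.
by rewrite -trmx_mul Mu linearZ.
Qed.

(* Eigenvalues of the lower-right block of a block upper triangular matrix
   are eigenvalues of the whole matrix (lift a left eigenvector by zeros). *)
Lemma ublock_root p q (M : 'M[F]_(p + q)) a :
  dlsubmx M = 0 -> root (char_poly (drsubmx M)) a -> root (char_poly M) a.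
Proof.
rewrite -eigenvalue_root_char => dl0 /eigenvalueP [v Dv vn0].
apply: (left_eigen_root (v := row_mx 0 v)).
  by apply: contra vn0 => /eqP/(congr1 rsubmx); rewrite row_mxKr linear0 => ->.
rewrite -(submxK M) dl0 mul_row_block !mul0mx mulmx0 !add0r Dv.
by rewrite scale_row_mx scaler0.
Qed.

Lemma orthogonal_conj_root n k (P : 'M[F]_(n, k)) (M : 'M[F]_n) a :
  P *m P^T = 1%:M -> P^T *m P = 1%:M ->
  root (char_poly (P^T *m M *m P)) a -> root (char_poly M) a.
Proof.
move=> PPt PtP; rewrite -eigenvalue_root_char => /eigenvalueP [w Mw wn0].
apply: (left_eigen_root (v := w *m P^T)).
  apply: contra wn0 => /eqP/(congr1 (mulmx^~ P)).
  by rewrite /= -mulmxA PtP mulmx1 mul0mx => ->.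
by rewrite scalemxAl -Mw -!mulmxA PPt mulmx1.
Qed.

End Eigenvectors.

Section OrthonormalBlocks.
Variables (F : fieldType) (d r s : nat) (P : 'M[F]_(d, r + s)).
Hypothesis rs_d : (r + s)%N = d.
Hypothesis PtP : P^T *m P = 1%:M.

Local Notation P1 := (lsubmx P).
Local Notation P2 := (rsubmx P).

Lemma P_blocks : [/\ P1^T *m P1 = 1%:M, P1^T *m P2 = 0,
                    P2^T *m P1 = 0 & P2^T *m P2 = 1%:M].
Proof.
move: PtP; rewrite -{1 2}(hsubmxK P) tr_row_mx mul_col_row (scalar_mx_block r s).
by move/eq_block_mx.
Qed.

Lemma PPt : P *m P^T = 1%:M.
Proof.
have P_free : row_free P.
  rewrite -row_leq_rank -[X in (X <= _)%N]rs_d.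
  by have := mxrankM_maxl P^T P; rewrite PtP mxrank1 mxrank_tr.
apply/eqP; rewrite -subr_eq0 -(mulmx_free_eq0 _ P_free).
by rewrite mulmxBl -mulmxA PtP mulmx1 mul1mx subrr.
Qed.

Lemma P_decomp (y : 'cV[F]_d) : y = P1 *m (P1^T *m y) + P2 *m (P2^T *m y).
Proof. by rewrite !mulmxA -mulmxDl -mul_row_col -tr_row_mx hsubmxK PPt mul1mx. Qed.

Lemma conj_blocks (M : 'M[F]_d) :
  P^T *m M *m P = block_mx (P1^T *m M *m P1) (P1^T *m M *m P2)
                           (P2^T *m M *m P1) (P2^T *m M *m P2).
Proof. by rewrite -{1 2}(hsubmxK P) tr_row_mx mul_col_mx mul_col_row. Qed.

End OrthonormalBlocks.

Section OrthonormalBasis.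
Variable R : rcfType.

Lemma rank_orthonormal j n (W : 'M[R]_(j, n)) : W *m W^T = 1%:M -> \rank W = j.
Proof.
move=> WWt; apply/eqP; rewrite eqn_leq rank_leq_row /=.
by have := mxrankM_maxl W W^T; rewrite WWt mxrank1.
Qed.

Lemma normalize_row n (v : 'rV[R]_n) : v != 0 ->
  exists2 c : R, c != 0 & (c *: v) *m (c *: v)^T = 1%:M.
Proof.
move=> vn0; pose q := \sum_j v 0 j ^+ 2.
have vvt : v *m v^T = q%:M.
  apply/matrixP => i i'; rewrite (ord1 i) (ord1 i') !mxE /= mulr1n.
  by apply: eq_bigr => j _; rewrite mxE expr2.
have q_gt0 : 0 < q.
  rewrite lt_def sumr_ge0 ?andbT => [|j _]; last exact: sqr_ge0.
  apply: contra vn0 => /eqP q0; apply/eqP/rowP => j; rewrite mxE.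
  have := psumr_eq0P (fun j _ => sqr_ge0 (v 0 j)) q0 (i:=j) isT.
  by move/eqP; rewrite sqrf_eq0 => /eqP.
exists (Num.sqrt q)^-1; first by rewrite invr_eq0 gt_eqF ?sqrtr_gt0.
rewrite linearZ /= -scalemxAr -scalemxAl vvt scalerA -invfM -expr2.
by rewrite sqr_sqrtr ?ltW // scale_scalar_mx mulVf ?gt_eqF.
Qed.

Lemma exists_unit_orth n p q (U : 'M[R]_(q, n)) (M : 'M[R]_(p, n)) :
  (\rank M < \rank U)%N ->
  exists v : 'rV[R]_n, [/\ (v <= U)%MS, M *m v^T = 0 & v *m v^T = 1%:M].
Proof.
move=> rMU; pose X := (U :&: kermx M^T)%MS.
have X_gt0 : (0 < \rank X)%N.
  have := mxrank_sum_cap U (kermx M^T); rewrite mxrank_ker mxrank_tr.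
  have := rank_leq_col (U + kermx M^T)%MS; have := rank_leq_col M.
  rewrite -/X; lia.
have v0n0 : nz_row X != 0 by rewrite nz_row_eq0 -mxrank_eq0 -lt0n.
have [c _ unit_v] := normalize_row v0n0.
have v0X : (nz_row X <= X)%MS := nz_row_sub X.
exists (c *: nz_row X); split=> //.
  by rewrite scalemx_sub // (submx_trans v0X) ?capmxSl.
have /eqP v0K : nz_row X *m M^T == 0.
  by rewrite -sub_kermx (submx_trans v0X) ?capmxSr.
by rewrite linearZ /= -scalemxAr -(trmxK M) -trmx_mul v0K trmx0 scaler0.
Qed.

Lemma extend_orthonormal n q k (U : 'M[R]_(q, n)) (W0 : 'M[R]_(k, n)) j :
  (\rank W0 + j <= \rank U)%N ->
  exists W : 'M[R]_(j, n), [/\ W *m W^T = 1%:M, W0 *m W^T = 0 & (W <= U)%MS].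
Proof.
elim: j => [|j IH] rk.
  by exists 0; split; [apply/matrixP => [[]] | apply/matrixP => ? [] | rewrite sub0mx].
have [W [WWt W0Wt WU]] : exists W : 'M[R]_(j, n),
    [/\ W *m W^T = 1%:M, W0 *m W^T = 0 & (W <= U)%MS].
  by apply: IH; rewrite addnS in rk; exact: ltnW.
have rM : (\rank (col_mx W0 W) < \rank U)%N.
  rewrite -addsmxE; apply: leq_ltn_trans (mxrank_adds_leqif _ _) _.
  by rewrite (rank_orthonormal WWt) -addnS.
have [v [vU /eqP Mv vvt]] := exists_unit_orth rM.
move: Mv; rewrite mul_col_mx col_mx_eq0 => /andP[/eqP W0v /eqP Wv].
have vWt : v *m W^T = 0 by rewrite -[v]trmxK -trmx_mul Wv trmx0.
exists (col_mx v W); rewrite -[j.+1]/(1 + j)%N tr_col_mx; split.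
- by rewrite mul_col_row vvt WWt Wv vWt -scalar_mx_block.
- by rewrite mul_mx_row W0v W0Wt row_mx0.
- by rewrite col_mx_sub vU WU.
Qed.

Lemma adapted_orthonormal_basis n (U : 'M[R]_n) :
  exists (r s : nat) (P : 'M[R]_(n, r + s)),
    [/\ (r + s)%N = n, P^T *m P = 1%:M &
        forall g : 'cV[R]_n, (g^T <= U)%MS <-> exists x, g = lsubmx P *m x].
Proof.
have [W1 [W1W1t _ W1U]] : exists W1 : 'M[R]_(\rank U, n),
    [/\ W1 *m W1^T = 1%:M, (0 : 'M[R]_(1, n)) *m W1^T = 0 & (W1 <= U)%MS].
  by apply: extend_orthonormal; rewrite mxrank0.
have rk2 : (\rank W1 + (n - \rank U) <= \rank (1%:M : 'M[R]_n))%N.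
  by rewrite (rank_orthonormal W1W1t) mxrank1 subnKC // rank_leq_col.
have [W2 [W2W2t W1W2t _]] := extend_orthonormal rk2.
have W2W1t : W2 *m W1^T = 0 by rewrite -[W2]trmxK -trmx_mul W1W2t trmx0.
have UW1 : (U <= W1)%MS.
  by rewrite -(geq_leqif (mxrank_leqif_sup W1U)) (rank_orthonormal W1W1t).
exists (\rank U), (n - \rank U)%N, (col_mx W1 W2)^T; split.
- by rewrite subnKC // rank_leq_col.
- by rewrite trmxK tr_col_mx mul_col_row W1W1t W2W2t W1W2t W2W1t -scalar_mx_block.
rewrite tr_col_mx row_mxKl => g; split=> [gU | [x ->]].
  have /submxP [x gx] := submx_trans gU UW1.
  by exists x^T; rewrite -trmx_mul -gx trmxK.
by rewrite trmx_mul trmxK (submx_trans (submxMl _ _) W1U).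
Qed.

End OrthonormalBasis.

Section IndexOne.
Variables (F : fieldType) (n : nat) (A : 'M[F]_n.+1).
Hypothesis ker_sq : forall x : 'cV[F]_n.+1, A *m (A *m x) = 0 -> A *m x = 0.

Lemma ker_pow_ker k (x : 'cV[F]_n.+1) : A ^+ k.+1 *m x = 0 -> A *m x = 0.
Proof.
elim: k x => [|k IH] x; first by rewrite expr1.
by rewrite exprSr -mulmxE -mulmxA => /IH; exact: ker_sq.
Qed.

(* Write char_poly A = q * X^k with q(0) = c != 0.  Cayley-Hamilton and
   ker A^(k+1) = ker A give A q(A) = 0, and c - q = r * X for some r. *)
Lemma index_one_decomp : exists (c : F) (q r : {poly F}),
  [/\ c != 0, forall x : 'cV[F]_n.+1, A *m (horner_mx A q *m x) = 0
    & c%:M = horner_mx A q + horner_mx A r * A].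
Proof.
have [k [q q0n0 char_q]] := multiplicity_XsubC (char_poly A) 0.
rewrite monic_neq0 ?char_poly_monic //= in q0n0.
rewrite polyC0 subr0 in char_q.
have qA_ker (x : 'cV[F]_n.+1) : A *m (horner_mx A q *m x) = 0.
  have := Cayley_Hamilton A; rewrite char_q mulrC rmorphM rmorphXn /= horner_mx_X.
  case: k {char_q} => [|k]; first by rewrite expr0 mul1r => ->; rewrite mul0mx mulmx0.
  by move=> CH; apply: (ker_pow_ker (k := k)); rewrite mulmxA mulmxE CH mul0mx.
have /factor_theorem [r cq] : root (q.[0]%:P - q) 0.
  by rewrite /root hornerD hornerN hornerC subrr.
exists q.[0], q, r; split=> //.
rewrite -(horner_mx_C A) -[horner_mx A q.[0]%:P](subrK (horner_mx A q)) addrC.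
by rewrite -rmorphB cq polyC0 subr0 rmorphM /= horner_mx_X addrC.
Qed.

End IndexOne.

Lemma inC_horner (R : rcfType) n (A : 'M[R]_n.+1) h p g :
  inC A h g -> inC A h (horner_mx A p *m g).
Proof.
elim/poly_ind: p g => [|p c IH] g Cg; first by rewrite rmorph0 mul0mx; exact: inC_0.
rewrite rmorphD rmorphM /= horner_mx_X horner_mx_C mulmxDl -mulmxE -mulmxA.
by apply: inC_add; [apply/IH/inC_A | rewrite mul_scalar_mx; exact: inC_scale].
Qed.

(* Index argument: if ker A lies in C and ker A^2 = ker A, then C contains
   every y with A y in C, since y = c^-1 (q(A) y + r(A) (A y)). *)
Lemma index_C (R : rcfType) d (A : 'M[R]_d) h :
  (forall y, A *m y = 0 -> inC A h y) ->
  (forall x : 'cV[R]_d, A *m (A *m x) = 0 -> A *m x = 0) ->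
  forall y, inC A h (A *m y) -> inC A h y.
Proof.
case: d A h => [|n] A h kerC ker_sq y CAy; first by rewrite [y]flatmx0; exact: inC_0.
have [c [q [r [cn0 qA_ker c_decomp]]]] := index_one_decomp ker_sq.
have -> : y = c^-1 *: (horner_mx A q *m y + horner_mx A r *m (A *m y)).
  rewrite -mulmxE in c_decomp.
  by rewrite mulmxA -mulmxDl -c_decomp mul_scalar_mx scalerA mulVf ?scale1r.
by apply/inC_scale/inC_add; [exact/kerC/qA_ker | exact: inC_horner].
Qed.

Lemma hurwitz_ker_trivial (R : rcfType) n (M : 'M[R]_n) (b : 'cV[R]_n) :
  hurwitz M -> M *m b = 0 -> b = 0.
Proof.
move=> M_hurwitz Mb0; apply/eqP; apply: contraT => bn0.
have /M_hurwitz : root (map_poly (real_complex R) (char_poly M)) (0%:C)%C.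
  by rewrite fmorph_root (right_eigen_root bn0) // Mb0 scale0r.
by rewrite -complexRe ltxx.
Qed.

Lemma mx_eq0_cols (F : pzRingType) p q (M : 'M[F]_(p, q)) :
  (forall x : 'cV[F]_q, M *m x = 0) -> M = 0.
Proof.
move=> M_ann; apply/matrixP => i j.
by have := congr1 (fun N : 'cV[F]_p => N i 0) (M_ann (delta_mx j 0)); rewrite -colE !mxE.
Qed.

(* The map induced by A on R^d / C, in an orthonormal basis P = [P1 P2]
   whose first block spans C. *)
Section Quotient.
Variables (R : rcfType) (d r s : nat) (A : 'M[R]_d) (h : 'cV[R]_d).
Variable P : 'M[R]_(d, r + s).
Hypothesis rs_d : (r + s)%N = d.
Hypothesis PtP : P^T *m P = 1%:M.

Local Notation P1 := (lsubmx P).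
Local Notation P2 := (rsubmx P).
Local Notation D := (drsubmx (P^T *m A *m P)).
Local Notation fC := (real_complex R).

Hypothesis P1_C : forall g : 'cV[R]_d, inC A h g <-> exists x, g = P1 *m x.

(* C is A-invariant, so the lower-left block of P^T A P vanishes. *)
Lemma C_lower_left : P2^T *m A *m P1 = 0.
Proof.
have [_ _ P2tP1 _] := P_blocks PtP.
apply: mx_eq0_cols => x.
have /P1_C [x' AP1x] : inC A h (A *m (P1 *m x)) by apply/inC_A/P1_C; exists x.
by rewrite -!mulmxA AP1x mulmxA P2tP1 mul0mx.
Qed.

Lemma quotient_block : D = P2^T *m A *m P2.
Proof. by rewrite conj_blocks block_mxKdr. Qed.

Lemma quotient_root z :
  root (map_poly fC (char_poly D)) z -> root (char_poly (map_mx fC A)) z.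
Proof.
rewrite map_char_poly map_drsubmx => /ublock_root Dz.
have [Pf PtPf] : map_mx fC P *m (map_mx fC P)^T = 1%:M /\
                 (map_mx fC P)^T *m map_mx fC P = 1%:M.
  by rewrite map_trmx -!map_mxM PPt // PtP !map_mx1.
apply: (orthogonal_conj_root Pf PtPf); rewrite map_trmx -!map_mxM; apply: Dz.
by rewrite -map_dlsubmx conj_blocks block_mxKdl C_lower_left map_mx0.
Qed.

Lemma quotient_ker_trivial :
  (forall y : 'cV[R]_d, inC A h (A *m y) -> inC A h y) ->
  forall b : 'cV[R]_s, D *m b = 0 -> b = 0.
Proof.
move=> index_C b Db0; have [_ _ P2tP1 P2tP2] := P_blocks PtP.
have CAy : inC A h (A *m (P2 *m b)).
  apply/P1_C; exists (P1^T *m (A *m (P2 *m b))).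
  have P2tAy : P2^T *m (A *m (P2 *m b)) = 0 by rewrite !mulmxA -quotient_block.
  by rewrite {1}(P_decomp rs_d PtP (A *m _)) P2tAy mulmx0 addr0.
have /P1_C [x P2b] := index_C _ CAy.
by rewrite -[b]mul1mx -P2tP2 -mulmxA P2b mulmxA P2tP1 mul0mx.
Qed.

(* Its eigenvalues with nonnegative real part are
   eigenvalues of A, hence 0 by Gershgorin, which the trivial kernel
   excludes. *)
Lemma quotient_hurwitz : rate_matrix A ->
  (forall y, inC A h (A *m y) -> inC A h y) -> hurwitz D.
Proof.
move=> rateA index_C z Dz; rewrite -complexRe ltcE /= eqxx /=.
have [//|Re_ge0] := ltP (complex.Re z) 0.
have [u un0 Au] := root_right_eigen (quotient_root Dz).
move: Dz; rewrite (rate_eigen_re_ge0 rateA un0 Au Re_ge0) -(rmorph0 fC) fmorph_root.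
move=> /root_right_eigen [b bn0]; rewrite scale0r => /(quotient_ker_trivial index_C).
by move/eqP: bn0.
Qed.

(* Conversely, if the quotient map is Hurwitz, ker A lies in C: the
   component P2^T y of a null vector y is a null vector of D. *)
Lemma ker_in_C_of_hurwitz : hurwitz D -> forall y, A *m y = 0 -> inC A h y.
Proof.
move=> D_hurwitz y Ay0; have [_ _ P2tP1 _] := P_blocks PtP.
have decomp := P_decomp rs_d PtP y.
have Db0 : D *m (P2^T *m y) = 0.
  rewrite quotient_block -mulmxA.
  have -> : P2 *m (P2^T *m y) = y - P1 *m (P1^T *m y).
    by rewrite {2}decomp addrAC subrr add0r.
  rewrite mulmxBr [P2^T *m A *m (P1 *m _)]mulmxA C_lower_left.
  by rewrite mul0mx subr0 -mulmxA Ay0 mulmx0.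
apply/P1_C; exists (P1^T *m y).
by rewrite {1}decomp (hurwitz_ker_trivial D_hurwitz Db0) mulmx0 addr0.
Qed.

End Quotient.

Lemma ker_in_C_of_stabilizable (R : rcfType) d (A : 'M[R]_d) h :
  stabilizable A h -> forall y, A *m y = 0 -> inC A h y.
Proof.
case=> [allC y _ | [_ [r [s [P [rs_d [PtP [P1_C D_hurwitz]]]]]]]]; first exact: allC.
exact: ker_in_C_of_hurwitz P1_C D_hurwitz.
Qed.

Lemma stabilizable_of_ker_in_C (R : rcfType) d (A : 'M[R]_d) h m
    (S : 'I_m -> {set 'I_d}) :
  rate_matrix A -> ergodic_partition A S ->
  (forall y, A *m y = 0 -> inC A h y) -> stabilizable A h.
Proof.
move=> rateA ergS kerC.
have [allC|nallC] := C_full_dec A h; [by left | right; split=> //].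
have [r [s [P [rs_d PtP P1_U]]]] := adapted_orthonormal_basis (Cmx A h).
have P1_C g : inC A h g <-> exists x, g = lsubmx P *m x.
  by split=> [/inCP/P1_U | /P1_U/inCP].
exists r, s, P; do 3 split=> //.
apply: (quotient_hurwitz rs_d PtP P1_C rateA).
exact: index_C kerC (ker_sq_ker rateA ergS).
Qed.

Unset Implicit Arguments. Set Strict Implicit.

Theorem proposition2 (R : rcfType) (d : nat) (A : 'M[R]_d) (h : 'cV[R]_d)
    (m : nat) (S : 'I_m -> {set 'I_d}) :
  rate_matrix A ->
  ergodic_partition A S ->
  (stabilizable A h <-> (forall y : 'cV[R]_d, A *m y = 0 -> inC A h y)) /\
  (m = 1%N -> stabilizable A h) /\
  (stabilizable A h <-> (forall k : 'I_m, inC A h (indic R (S k)))).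
Proof.
move=> rateA ergS.
have stab_ker : stabilizable A h <-> (forall y, A *m y = 0 -> inC A h y).
  split; [exact: ker_in_C_of_stabilizable | exact: stabilizable_of_ker_in_C rateA ergS].
have ker_indic := ker_in_C_iff_indic rateA ergS h.
split=> //; split=> [m1|]; last exact: iff_trans stab_ker ker_indic.
apply/stab_ker/ker_indic => k; rewrite (indic_single_class ergS m1).
exact: inC_ones.
Qed.
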